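(* Let $F$ be a face of $\delta\mathcal{A}_{\bm o}$, $\bm a,\bm b\in\operatorname{relint}(F)$, and $I,J,K$ a partition of $[m]$. Write $P_{\bm a}=P(\bm a,I,J,K)$ and $P_{\bm b}=P(\bm b,I,J,K)$. Then the map $\Phi$ from the face poset of $P_{\bm a}$ to that of $P_{\bm b}$ defined by $\Phi(\emptyset)=\emptyset$ and $\Phi(G)=P\big(\bm b,I_{P_{\bm a}}(G),J_{P_{\bm a}}(G),K_{P_{\bm a}}(G)\big)$ for nonempty faces $G$ is a well-defined bijection, and for each nonempty face $G$ of $P_{\bm a}$, $\Phi(G)$ is nonempty and has the same active triple index (with respect to $P_{\bm b}$) as $G$ (with respect to $P_{\bm a}$).
   Context: Fix nonzero $\bm u_1,\dots,\bm u_m\in\mathbb{R}^n$ (repetitions and parallel vectors allowed), $U$ the matrix with these rows; $U_I,\bm a_I$ denote rows/entries indexed by $I$. For a partition $I,J,K$ of $[m]$, $P(\bm a,I,J,K)=\{\bm x\in\mathbb{R}^n:U_I\bm x=\bm a_I,\ U_J\bm x\le\bm a_J,\ U_K\bm x\ge\bm a_K\}$; faces of a polyhedron include $\emptyset$ and the polyhedron itself. For a nonempty face $G$ of $P=P(\bm a,I,J,K)$: $I_P(G)=\{i\in[m]:\langle\bm u_i,\bm x\rangle=a_i\}$ for any $\bm x\in\operatorname{relint}(G)$, $J_P(G)=J\setminus I_P(G)$, $K_P(G)=K\setminus I_P(G)$; $(I_P(G),J_P(G),K_P(G))$ is the active triple index. A circuit is $C\subseteq[m]$ with $\{\bm u_i:i\in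 C\}$ a minimal linearly dependent indexed family; $\bm c^C$ satisfies $\sum c_i\bm u_i=\bm0$, $c_i\neq0\iff i\in C$. The derived arrangement $\delta\mathcal{A}_{\bm o}$ consists of the hyperplanes $\langle\bm c^C,\bm y\rangle=0$ in $\mathbb{R}^m$; its open faces are the nonempty sets $\{\bm y:\operatorname{sign}\langle \bm c^C,\bm y\rangle=\epsilon_C\ \forall C\}$, faces are their closures, and $\operatorname{relint}(F)$ is the open face with closure $F$. *)

From HB Require Import structures.
From mathcomp Require Import all_boot all_order all_algebra.
From mathcomp Require Import reals.
Set Implicit Arguments. Unset Strict Implicit. Unset Printing Implicit Defensive.
Import Order.TTheory GRing.Theory Num.Theory.
Local Open Scope ring_scope.

Section PolyDefs.
Variables (R : realType) (n m : nat).

Definition pset (k : nat) := 'cV[R]_k -> Prop.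

Definition dotv (k : nat) (u v : 'cV[R]_k) : R := \sum_(i < k) u i 0 * v i 0.

Definition near_inf (k : nat) (x y : 'cV[R]_k) (e : R) : Prop :=
  forall i, `|x i 0 - y i 0| < e.

Definition affhull (k : nat) (S : pset k) : pset k := fun y =>
  exists (N : nat) (z : 'I_N -> 'cV[R]_k) (l : 'I_N -> R),
    (forall t, S (z t)) /\ \sum_(t < N) l t = 1 /\ y = \sum_(t < N) l t *: z t.

Definition relint (k : nat) (S : pset k) : pset k := fun x =>
  S x /\ exists e : R, 0 < e /\
    forall y, affhull S y -> near_inf x y e -> S y.

Definition closure (k : nat) (S : pset k) : pset k := fun y =>
  forall e : R, 0 < e -> exists z, S z /\ near_inf z y e.

(* rows of U : 'M_(m,n) are u_1..u_m; (U *m x) i 0 = <u_i, x> *)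
Definition Ppoly (U : 'M[R]_(m, n)) (a : 'cV[R]_m) (I J K : {set 'I_m}) : pset n :=
  fun x => forall i,
    (i \in I -> (U *m x) i 0 = a i 0) /\
    (i \in J -> (U *m x) i 0 <= a i 0) /\
    (i \in K -> (U *m x) i 0 >= a i 0).

(* faces of a polyhedron (including the empty set and the polyhedron itself) *)
Definition isFace (P : pset n) (G : pset n) : Prop :=
  exists (c : 'cV[R]_n) (d : R),
    (forall x, P x -> dotv c x <= d) /\ G = (fun x => P x /\ dotv c x = d).

Definition tight (U : 'M[R]_(m, n)) (a : 'cV[R]_m) (x : 'cV[R]_n) : {set 'I_m} :=
  [set i | (U *m x) i 0 == a i 0].

Definition dependent (U : 'M[R]_(m, n)) (C : {set 'I_m}) : Prop :=
  exists c : 'I_m -> R, (forall i, i \notin C -> c i = 0) /\ (exists i, c i != 0) /\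
    \sum_(i < m) c i *: row i U = 0.

Definition circuit (U : 'M[R]_(m, n)) (C : {set 'I_m}) : Prop :=
  dependent U C /\ forall C' : {set 'I_m}, C' \proper C -> ~ dependent U C'.

Definition circuit_vec (U : 'M[R]_(m, n)) (C : {set 'I_m}) (c : 'cV[R]_m) : Prop :=
  \sum_(i < m) c i 0 *: row i U = 0 /\ forall i, c i 0 != 0 <-> i \in C.

(* derived arrangement, given the chosen circuit vectors cC *)
Definition dopen_set (U : 'M[R]_(m, n)) (cC : {set 'I_m} -> 'cV[R]_m)
    (eps : {set 'I_m} -> R) : pset m :=
  fun y => forall C, circuit U C -> Num.sg (dotv (cC C) y) = eps C.

Definition dopen_face U cC eps : Prop := exists y, dopen_set U cC eps y.

Definition dface U cC (F : pset m) : Prop :=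
  exists eps, dopen_face U cC eps /\ F = closure (dopen_set U cC eps).

(* relint of a face F of the derived arrangement: the open face with closure F *)
Definition drelint U cC (F : pset m) : pset m := fun y =>
  exists eps, dopen_face U cC eps /\ closure (dopen_set U cC eps) = F /\
    dopen_set U cC eps y.

End PolyDefs.

From Pilot Require Import Defs.
From HB Require Import structures.
From mathcomp Require Import all_boot all_order all_algebra.
From mathcomp Require Import reals boolp.
From mathcomp Require Import ring lra.
Set Implicit Arguments. Unset Strict Implicit. Unset Printing Implicit Defensive.
Import Order.TTheory GRing.Theory Num.Theory.
Local Open Scope ring_scope.

(* Whether some x has prescribed signs sg(<u_i, x> - a_i) depends on a only through
   the signs of <c^C, a>, C a circuit.  Indeed, by Motzkin's transposition theorem a
   non-realizable sign vector has an obstruction l with l U = 0; a conformal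
   decomposition makes l elementary, i.e. a multiple of some c^C, and whether a
   multiple of c^C obstructs at a is read off from sg <c^C, a>.  Two points in the
   relative interior of the same face of the derived arrangement give the same circuit
   signs, so P_a and P_b realize the same sets of tight inequalities.  A nonempty face
   G of P_a equals P(a, T, J\T, K\T) for T the set of inequalities tight on all of G,
   and T is the tight set of the relative-interior points of G; hence
   G |-> P(b, T, J\T, K\T) is a bijection between the face posets that preserves T. *)

Section FiniteBounds.
Variable R : realFieldType.

Lemma sumr_ge_term (I : finType) (F : I -> R) j :
  (forall i, 0 <= F i) -> F j <= \sum_i F i.
Proof. by move=> F0; rewrite (bigD1 j) //= lerDl sumr_ge0. Qed.

Lemma sumr_gt0_term (I : finType) (F : I -> R) j :
  (forall i, 0 <= F i) -> 0 < F j -> 0 < \sum_i F i.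
Proof. by move=> F0 Fj; apply: lt_le_trans Fj (sumr_ge_term _ F0). Qed.

Lemma sumr_lt0_term (I : finType) (F : I -> R) j :
  (forall i, F i <= 0) -> F j < 0 -> \sum_i F i < 0.
Proof.
move=> F0 Fj; rewrite -oppr_gt0 -sumrN.
by apply: (sumr_gt0_term (j := j)) => [i|] /=; rewrite ?oppr_ge0 ?oppr_gt0.
Qed.

Lemma exists_between (I : finType) (A B : pred I) (L H : I -> R) :
  (forall i j, A i -> B j -> L i < H j) ->
  exists z, (forall i, A i -> L i < z) /\ (forall j, B j -> z < H j).
Proof.
move=> LH; case: (pickP A) => [i1 Ai1|A0]; case: (pickP B) => [j1 Bj1|B0].
- case: (arg_maxP L Ai1) => i Ai maxL; case: (arg_minP H Bj1) => j Bj minH.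
  have [lo hi] := midf_lt (LH i j Ai Bj).
  exists ((L i + H j) / 2); split => [i' /maxL|j' /minH] h.
    exact: le_lt_trans h lo.
  exact: lt_le_trans hi h.
- case: (arg_maxP L Ai1) => i Ai maxL; exists (L i + 1); split => [i' /maxL|j].
    by move=> h; apply: le_lt_trans h _; rewrite ltrDl.
  by rewrite B0.
- case: (arg_minP H Bj1) => j Bj minH; exists (H j - 1); split => [i|j' /minH].
    by rewrite A0.
  by move=> h; apply: lt_le_trans h; rewrite ltrBlDr ltrDl.
- by exists 0; split => [i|j]; rewrite ?A0 ?B0.
Qed.

Lemma exists_pos_lower_bound (I : finType) (B : pred I) (g : I -> R) :
  (forall i, B i -> 0 < g i) -> exists g0, 0 < g0 /\ forall i, B i -> g0 <= g i.
Proof.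
move=> gpos; case: (pickP B) => [i1 Bi1|B0]; last by exists 1; split => // i; rewrite B0.
by case: (arg_minP g Bi1) => i Bi ming; exists (g i); split; [exact: gpos|].
Qed.

Lemma sgr_near (u v : R) : `|u - v| < `|v| -> Num.sg u = Num.sg v.
Proof.
move=> uv; have h1 := ler_norm (u - v).
have h2 : - (u - v) <= `|u - v| by rewrite -normrN ler_norm.
case: (ltgtP v 0) => v0.
- by rewrite (ltr0_sg v0) ltr0_sg //; move: uv; rewrite (ltr0_norm v0); lra.
- by rewrite (gtr0_sg v0) gtr0_sg //; move: uv; rewrite (gtr0_norm v0); lra.
- by move: uv; rewrite v0 normr0 ltNge normr_ge0.
Qed.

Lemma exists_small_scale (I : finType) (f : I -> R) e :
  0 < e -> exists t, 0 < t /\ forall i, t * `|f i| < e.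
Proof.
move=> e0; pose M := \sum_i `|f i|.
have M1 : 0 < M + 1 by rewrite ltr_wpDl ?sumr_ge0.
exists (e / (M + 1)); split; first by rewrite divr_gt0.
move=> i; rewrite mulrAC ltr_pdivrMr // ltr_pM2l //.
by have := sumr_ge_term i (fun i => normr_ge0 (f i)); rewrite -/M; lra.
Qed.

End FiniteBounds.

Section Motzkin.
Variable R : realFieldType.

Definition dotf N (l y : 'I_N -> R) := \sum_(k < N) l k * y k.

Definition extend N (y : 'I_N -> R) (z : R) : 'I_N.+1 -> R :=
  fun k => if unlift ord_max k is Some k' then y k' else z.

Definition restrict N (l : 'I_N.+1 -> R) : 'I_N -> R :=
  fun k => l (widen_ord (leqnSn N) k).

Lemma widen_ord_lift N (k : 'I_N) : widen_ord (leqnSn N) k = lift ord_max k.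
Proof. by apply: val_inj; rewrite /= /bump leqNgt ltn_ord. Qed.

Lemma unlift_widen N (k : 'I_N) : unlift ord_max (widen_ord (leqnSn N) k) = Some k.
Proof. by rewrite widen_ord_lift liftK. Qed.

Lemma extend_widen N y z (k : 'I_N) : extend y z (widen_ord (leqnSn N) k) = y k.
Proof. by rewrite /extend unlift_widen. Qed.

Lemma extend_max N (y : 'I_N -> R) z : extend y z ord_max = z.
Proof. by rewrite /extend unlift_none. Qed.

Lemma ord_maxVwiden N (k : 'I_N.+1) :
  k = ord_max \/ exists k', k = widen_ord (leqnSn N) k'.
Proof.
case: (unliftP ord_max k) => [k' ->|->]; last by left.
by right; exists k'; rewrite widen_ord_lift.
Qed.

Lemma dotf_recr N (l y : 'I_N.+1 -> R) :
  dotf l y = dotf (restrict l) (restrict y) + l ord_max * y ord_max.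
Proof. by rewrite /dotf big_ord_recr. Qed.

Lemma dotf_extend N (l : 'I_N.+1 -> R) y z :
  dotf l (extend y z) = dotf (restrict l) y + l ord_max * z.
Proof.
rewrite dotf_recr extend_max; congr (_ + _).
by apply: eq_bigr => k _; rewrite /restrict extend_widen.
Qed.

Lemma dotf_comb N (f g y : 'I_N -> R) c :
  dotf (fun k => f k - c * g k) y = dotf f y - c * dotf g y.
Proof. by rewrite /dotf mulr_sumr -sumrB; apply: eq_bigr => k _; ring. Qed.

Definition motzkin_sol N (I : finType) (l : I -> 'I_N -> R) (S : pred I) y :=
  forall i, if S i then is_true (0 < dotf (l i) y) else dotf (l i) y = 0.

Definition motzkin_cert N (I : finType) (l : I -> 'I_N -> R) (S : pred I) (mu : I -> R) :=
  [/\ forall i, S i -> 0 <= mu i, exists i, S i /\ 0 < mu i &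
      forall k, \sum_i mu i * l i k = 0].

Definition motzkin_alternative N (I : finType) (l : I -> 'I_N -> R) (S : pred I) :=
  (exists y, motzkin_sol l S y) \/ (exists mu, motzkin_cert l S mu).

Lemma motzkin0 (I : finType) (l : I -> 'I_0 -> R) S : motzkin_alternative l S.
Proof.
case: (pickP S) => [i0 Si0|S0]; last first.
  by left; exists (fun _ => 0) => i; rewrite S0 /dotf big_ord0.
right; exists (fun j => (j == i0)%:R); split => [i _||[]//].
- by rewrite ler0n.
- by exists i0; rewrite eqxx ltr01.
Qed.

Section MotzkinStep.
Variables (N : nat) (I : finType) (l : I -> 'I_N.+1 -> R) (S : pred I).
Hypothesis motzkinN :
  forall (I' : finType) (l' : I' -> 'I_N -> R) S', motzkin_alternative l' S'.

Let p i := restrict (l i).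
Let q i := l i ord_max.

(* An equation with a nonzero last coefficient lets us solve for the last variable. *)
Lemma motzkin_step_eq e : ~~ S e -> q e != 0 -> motzkin_alternative l S.
Proof.
move=> nSe qe; pose l' i k := p i k - q i / q e * p e k.
case: (motzkinN l' S) => [[y' sol]|[mu' [mu'0 [i [Si mu'i]] ker]]].
  left; exists (extend y' (- dotf (p e) y' / q e)) => i.
  have -> : dotf (l i) (extend y' (- dotf (p e) y' / q e)) = dotf (l' i) y'.
    by rewrite dotf_extend /l' dotf_comb -/(p i) -/(q i); field.
  exact: sol.
pose c := \sum_j mu' j * q j / q e.
have eSe j : j = e -> S j = false by move=> ->; apply: negbTE.
right; exists (fun j => if j == e then mu' e - c else mu' j); split.
- by move=> j Sj; case: eqP => [/eSe|_]; [rewrite Sj | exact: mu'0].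
- by exists i; split => //; case: eqP => [/eSe|//]; rewrite Si.
have sum_upd (g : I -> R) x :
    \sum_j (if j == e then x else mu' j) * g j = \sum_j mu' j * g j + (x - mu' e) * g e.
  rewrite (bigD1 e) //= eqxx [in RHS](bigD1 e) //=.
  rewrite (eq_bigr (fun j => mu' j * g j)); last by move=> j /negbTE ->.
  by ring.
have hc : c * q e = \sum_j mu' j * q j by rewrite /c -mulr_suml divfK.
move=> k; rewrite sum_upd addrAC subrr add0r mulNr.
case: (ord_maxVwiden k) => [->|[k' ->]]; first by rewrite -/(q e) hc subrr.
rewrite -[RHS](ker k') /l'; under [RHS]eq_bigr do rewrite mulrBr.
rewrite sumrB; congr (_ - _).
by rewrite /c mulr_suml; apply: eq_bigr => j _; rewrite /q /p /restrict; ring.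
Qed.

(* Fourier-Motzkin: keep the rows with zero last coefficient and combine every
   strict row with positive last coefficient with every one with negative. *)
Definition fm_pair (x : I * I) := [&& S x.1, S x.2, 0 < q x.1 & q x.2 < 0].

Definition fm_comb (r : I -> R) (u : I + I * I) : R :=
  match u with
  | inl i => if q i == 0 then r i else 0
  | inr x => if fm_pair x then - q x.2 * r x.1 + q x.1 * r x.2 else 0
  end.

Definition fm_rows (u : I + I * I) (k : 'I_N) := fm_comb (fun i => p i k) u.

Definition fm_strict (u : I + I * I) :=
  match u with inl i => S i && (q i == 0) | inr x => fm_pair x end.

Lemma dotf_fm_rows u y : dotf (fm_rows u) y = fm_comb (fun i => dotf (p i) y) u.
Proof.
rewrite /fm_rows /fm_comb /dotf; case: u => [i|x].
  by case: (q i == 0); rewrite // big1 // => k _; rewrite mul0r.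
case: (fm_pair x); last by rewrite big1 // => k _; rewrite mul0r.
by rewrite !mulr_sumr -big_split; apply: eq_bigr => k _ /=; ring.
Qed.

Lemma fm_sol_lift y : (forall e, ~~ S e -> q e = 0) ->
  motzkin_sol fm_rows fm_strict y -> exists y', motzkin_sol l S y'.
Proof.
move=> q0 sol; pose v i := dotf (p i) y.
have sep i j : S i && (0 < q i) -> S j && (q j < 0) -> - v i / q i < v j / - q j.
  move=> /andP[Si qi] /andP[Sj qj].
  have := sol (inr (i, j)); rewrite /= /fm_pair /= Si Sj qi qj /= dotf_fm_rows.
  rewrite /fm_comb /fm_pair /= Si Sj qi qj /= -/(v i) -/(v j).
  have qj' : 0 < - q j by rewrite oppr_gt0.
  by rewrite ltr_pdivlMr // mulrAC ltr_pdivrMr // => h; lra.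
have [z [zi zj]] := exists_between sep.
exists (extend y z) => i; rewrite dotf_extend -/(p i) -/(q i) -/(v i).
case Si: (S i); last first.
  have qi : q i = 0 := q0 i (negbT Si).
  have := sol (inl i); rewrite /= Si dotf_fm_rows /= qi eqxx => h.
  by rewrite mul0r addr0; exact: h.
case: (ltgtP (q i) 0) => qi.
- have qi' : 0 < - q i by rewrite oppr_gt0.
  by have := zj i; rewrite Si qi ltr_pdivlMr // => /(_ isT) h; lra.
- by have := zi i; rewrite Si qi ltr_pdivrMr // => /(_ isT) h; lra.
- have := sol (inl i); rewrite /= Si qi eqxx /= dotf_fm_rows /= qi eqxx => h.
  by rewrite mul0r addr0.
Qed.

(* The multipliers of a certificate for the eliminated system, pulled back to the
   rows of [l]. *)
Definition fm_weight (mu : I + I * I -> R) i : R :=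
  (if q i == 0 then mu (inl i) else 0)
  + \sum_j (if fm_pair (i, j) then mu (inr (i, j)) * - q j else 0)
  + \sum_j (if fm_pair (j, i) then mu (inr (j, i)) * q j else 0).

Lemma sum_fm_weight mu r : \sum_i fm_weight mu i * r i = \sum_u mu u * fm_comb r u.
Proof.
rewrite big_sumType /=; under eq_bigr do rewrite !mulrDl.
rewrite !big_split /= -addrA; congr (_ + _).
  by apply: eq_bigr => i _; case: eqP => _; rewrite ?mul0r ?mulr0.
rewrite (eq_bigr (fun i =>
  \sum_j (if fm_pair (i, j) then mu (inr (i, j)) * - q j else 0) * r i)) => [|i _]; last first.
  by rewrite mulr_suml.
rewrite [X in _ + X](eq_bigr (fun i =>
  \sum_j (if fm_pair (j, i) then mu (inr (j, i)) * q j else 0) * r i)) => [|i _]; last first.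
  by rewrite mulr_suml.
rewrite [X in _ + X]exchange_big !pair_bigA -big_split; apply: eq_bigr => -[i j] _ /=.
by case: fm_pair; rewrite ?mul0r ?mulr0 ?addr0 //; ring.
Qed.

Lemma fm_cert_lift mu : motzkin_cert fm_rows fm_strict mu -> motzkin_cert l S (fm_weight mu).
Proof.
move=> [mu0 [u [Su mu_u]] ker].
have A0 i : S i -> 0 <= if q i == 0 then mu (inl i) else 0.
  by move=> Si; case: eqP => // /eqP qi; apply: mu0; rewrite /= Si qi.
have B0 i j : 0 <= (if fm_pair (i, j) then mu (inr (i, j)) * - q j else 0).
  case hx: (fm_pair _) => //; move: (hx) => /and4P[_ _ _ qj].
  by rewrite mulr_ge0 ?mu0 // oppr_ge0 ltW.
have C0 i : 0 <= \sum_j (if fm_pair (j, i) then mu (inr (j, i)) * q j else 0).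
  apply: sumr_ge0 => j _; case hx: (fm_pair _) => //; move: (hx) => /and4P[_ _ qj _].
  by rewrite mulr_ge0 ?mu0 // ltW.
split.
- by move=> i Si; rewrite !addr_ge0 ?A0 ?C0 ?(sumr_ge0 _ (fun j _ => B0 i j)).
- case: u Su mu_u => [i|[i j]] /= Su mu_u.
    case/andP: Su => Si qi; exists i; split => //.
    by rewrite /fm_weight qi ltr_wpDr ?C0 // ltr_wpDr ?(sumr_ge0 _ (fun j _ => B0 i j)).
  move: (Su) => /and4P[Si _ _ qj]; exists i; split => //.
  rewrite /fm_weight addrAC ltr_wpDl ?addr_ge0 ?A0 ?C0 //.
  by apply: (sumr_gt0_term (j := j) (B0 i)); rewrite Su mulr_gt0 // oppr_gt0.
move=> k; case: (ord_maxVwiden k) => [->|[k' ->]].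
  rewrite (sum_fm_weight mu q) big1 // => -[i|x] _ /=.
    by case: eqP => [->|]; rewrite mulr0.
  by case: fm_pair; rewrite ?mulr0 // mulNr [q x.1 * _]mulrC addNr mulr0.
by rewrite (sum_fm_weight mu (fun i => p i k')); apply: ker.
Qed.

Lemma motzkin_step : motzkin_alternative l S.
Proof.
case: (pickP (fun e => ~~ S e && (q e != 0))) => [e /andP[]|qS].
  exact: motzkin_step_eq.
have q0 e : ~~ S e -> q e = 0 by move=> nSe; move: (qS e); rewrite nSe => /negbT/negbNE/eqP.
case: (motzkinN fm_rows fm_strict) => [[y /(fm_sol_lift q0)]|[mu /fm_cert_lift]];
  by [left | right; exists (fm_weight mu)].
Qed.

End MotzkinStep.

Theorem motzkin N (I : finType) (l : I -> 'I_N -> R) S : motzkin_alternative l S.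
Proof.
elim: N I l S => [|N IH] I l S; first exact: motzkin0.
exact: motzkin_step.
Qed.

End Motzkin.

Section SignRealizability.
Variables (R : realFieldType) (m n : nat) (U : 'M[R]_(m, n)).

Definition sign_realizable (a : 'cV[R]_m) (s : 'I_m -> R) :=
  exists x : 'cV[R]_n, forall i, Num.sg ((U *m x) i 0 - a i 0) = s i.

Definition lkernel (l : 'I_m -> R) := forall k, \sum_i l i * U i k = 0.

Definition dotl (l : 'I_m -> R) (a : 'cV[R]_m) := \sum_i l i * a i 0.

(* If [l U = 0] and [x] realizes [s], every [l_i (<u_i, x> - a_i)] is [>= 0] while
   their sum is [- <l, a> <= 0]; the last condition makes one of these strict. *)
Definition obstruction (a : 'cV[R]_m) (s l : 'I_m -> R) :=
  [/\ forall i, 0 <= s i * l i, 0 <= dotl l a &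
      (exists i, 0 < s i * l i) \/ 0 < dotl l a].

Definition sign_vector (s : 'I_m -> R) := forall i, s i = 0 \/ s i = 1 \/ s i = -1.

Lemma obstruction_not_realizable a s l :
  lkernel l -> obstruction a s l -> ~ sign_realizable a s.
Proof.
move=> kl [sl0 la0 strict] [x sx]; pose D i := (U *m x) i 0 - a i 0.
have lD : \sum_i l i * D i = - dotl l a.
  rewrite /D /dotl; under eq_bigr do rewrite mulrBr.
  rewrite sumrB -[RHS]add0r; congr (_ - _).
  under eq_bigr do rewrite mxE mulr_sumr.
  rewrite exchange_big /= big1 // => k _.
  transitivity (x k 0 * \sum_i l i * U i k); last by rewrite kl mulr0.
  by rewrite mulr_sumr; apply: eq_bigr => i _; ring.
have eD i : D i = s i * `|D i| by rewrite -(sx i) -numEsg.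
have lD0 i : 0 <= l i * D i by rewrite eD mulrA [l i * _]mulrC mulr_ge0.
have sum0 : 0 <= \sum_i l i * D i by apply: sumr_ge0.
case: strict => [[i si]|la]; last by move: sum0; rewrite lD; lra.
have Di : 0 < `|D i|.
  rewrite normr_gt0; apply: contraTneq si => Di0.
  by rewrite -(sx i) -/(D i) Di0 sgr0 mul0r ltxx.
have : 0 < \sum_i l i * D i.
  by apply: (sumr_gt0_term (j := i) lD0); rewrite eD mulrA [l i * _]mulrC mulr_gt0.
by rewrite lD; lra.
Qed.

Lemma obstruction_neq0 (a : 'cV[R]_m) (s c : 'I_m -> R) :
  obstruction a s c -> exists i, c i != 0.
Proof.
case=> _ _ [[i si]|ca]; first by exists i; apply: contraTneq si => ->; rewrite mulr0 ltxx.
apply/existsP; apply: contraTT ca => /existsPn c0.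
by rewrite -leNgt /dotl big1 // => i _; move/negbNE/eqP: (c0 i) ->; rewrite mul0r.
Qed.

Lemma obstruction_sgr (a b : 'cV[R]_m) (s c : 'I_m -> R) :
  Num.sg (dotl c a) = Num.sg (dotl c b) -> obstruction a s c -> obstruction b s c.
Proof.
move=> e [sc ca strict]; split => //; first by rewrite -sgr_ge0 -e sgr_ge0.
by case: strict => [|ca']; [left | right; rewrite -sgr_gt0 -e sgr_gt0].
Qed.

Section Homogenization.
Variables (a : 'cV[R]_m) (s : 'I_m -> R).
Hypothesis sign_s : sign_vector s.

Let c i := if s i == 0 then 1 else s i.

Lemma homog_weight i : s i * c i = (s i != 0)%:R.
Proof.
rewrite /c; case: eqP => [->|s0]; first by rewrite mul0r.
by case: (sign_s i) => [//|[]->]; rewrite ?mulr1 ?mulrNN ?mulr1.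
Qed.

(* Row i of the homogenized system is c_i (<u_i, x> - a_i t) in the unknown (x, t),
   with c_i = s_i (or 1 where s_i = 0); the last row is t itself. *)
Definition homog_rows (j : 'I_m.+1) (k : 'I_n.+1) : R :=
  extend (fun i => c i * extend (fun k' => U i k') (- a i 0) k)
         (extend (fun _ => 0) 1 k) j.

Definition homog_strict (j : 'I_m.+1) :=
  if unlift ord_max j is Some i then s i != 0 else true.

Lemma homog_sol_realizable y :
  motzkin_sol homog_rows homog_strict y -> sign_realizable a s.
Proof.
move=> sol; pose t := y ord_max.
have t0 : 0 < t.
  have := sol ord_max; rewrite /homog_strict unlift_none dotf_recr /homog_rows !extend_max.
  by rewrite /dotf big1 ?add0r ?mul1r // => k _; rewrite /restrict extend_max extend_widen mul0r.
exists (\col_k (restrict y k / t)) => i.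
set D := \sum_k U i k * restrict y k - a i 0 * t.
have eD : (U *m \col_k (restrict y k / t)) i 0 - a i 0 = D / t.
  rewrite mxE /D mulrBl mulr_suml -mulrA divff ?gt_eqF // mulr1; congr (_ - _).
  by apply: eq_bigr => k _; rewrite mxE mulrA.
have := sol (widen_ord (leqnSn m) i); rewrite /homog_strict unlift_widen.
have -> : dotf (homog_rows (widen_ord (leqnSn m) i)) y = c i * D.
  rewrite dotf_recr /homog_rows extend_widen extend_max /D mulrBr mulr_sumr.
  congr (_ + _); last by rewrite /t; ring.
  by apply: eq_bigr => k _; rewrite /restrict !extend_widen; ring.
rewrite eD /c; case: eqP => [->|s0]; first by rewrite mul1r => ->; rewrite mul0r sgr0.
case: (sign_s i) => [//|[]->]; first by rewrite mul1r => D0; rewrite gtr0_sg ?divr_gt0.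
by rewrite mulN1r oppr_gt0 => D0; rewrite ltr0_sg // pmulr_llt0 ?invr_gt0.
Qed.

Lemma homog_cert_obstruction mu :
  motzkin_cert homog_rows homog_strict mu -> exists l, lkernel l /\ obstruction a s l.
Proof.
move=> [mu0 [j [Sj muj]] ker]; pose l i := c i * mu (widen_ord (leqnSn m) i).
have kl : lkernel l.
  move=> k; rewrite -[RHS](ker (widen_ord (leqnSn n) k)) big_ord_recr /= /homog_rows.
  rewrite extend_max extend_widen mulr0 addr0; apply: eq_bigr => i _.
  by rewrite !extend_widen /l; ring.
have la : dotl l a = mu ord_max.
  have : \sum_j mu j * homog_rows j ord_max = mu ord_max - dotl l a.
    rewrite big_ord_recr /= /homog_rows !extend_max mulr1 addrC -sumrN.
    by congr (_ + _); apply: eq_bigr => i _; rewrite extend_widen extend_max /l; ring.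
  by rewrite ker => /eqP; rewrite eq_sym subr_eq0 => /eqP.
have sl i : s i * l i = (s i != 0)%:R * mu (widen_ord (leqnSn m) i).
  by rewrite /l mulrA homog_weight.
exists l; split => //; split.
- move=> i; rewrite sl; case: (s i =P 0) => s0; rewrite ?mul0r // mul1r.
  by apply: mu0; rewrite /homog_strict unlift_widen; apply/eqP.
- by rewrite la mu0 // /homog_strict unlift_none.
case: (ord_maxVwiden j) => [ej|[i ej]]; subst j; first by right; rewrite la.
left; exists i; move: Sj; rewrite /homog_strict unlift_widen sl => ->.
by rewrite mul1r.
Qed.

Lemma not_realizable_obstruction :
  ~ sign_realizable a s -> exists l, lkernel l /\ obstruction a s l.
Proof.
move=> nr; case: (motzkin homog_rows homog_strict) => [[y /homog_sol_realizable]//|].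
by case=> mu /homog_cert_obstruction.
Qed.

End Homogenization.
End SignRealizability.

Section ElementaryVectors.
Variables (R : realFieldType) (m n : nat) (U : 'M[R]_(m, n)).

Local Notation lkernel := (lkernel U).

Definition supp (l : 'I_m -> R) := [set i | l i != 0].

Definition elementary (l : 'I_m -> R) :=
  forall mu, lkernel mu -> supp mu \proper supp l -> forall i, mu i = 0.

Definition conformal (l nu : 'I_m -> R) :=
  forall i, 0 <= l i * nu i /\ (l i = 0 -> nu i = 0).

Definition conformal_part (l nu : 'I_m -> R) :=
  [/\ lkernel nu, conformal l nu & (#|supp nu| < #|supp l|)%N].

Lemma lkernel_comb l mu x y :
  lkernel l -> lkernel mu -> lkernel (fun i => x * l i + y * mu i).
Proof.
move=> kl kmu k; under eq_bigr do rewrite mulrDl -!mulrA.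
by rewrite big_split /= -!mulr_sumr kl kmu !mulr0 addr0.
Qed.

Lemma eq_lkernel (l1 l2 : 'I_m -> R) : l1 =1 l2 -> lkernel l2 -> lkernel l1.
Proof. by move=> e kl k; rewrite -[RHS](kl k); apply: eq_bigr => i _; rewrite e. Qed.

Lemma lkernelZ l c : lkernel l -> lkernel (fun i => c * l i).
Proof. by move=> kl; apply: eq_lkernel (lkernel_comb c 0 kl kl) => i; ring. Qed.

Lemma suppZ l c : c != 0 -> supp (fun i => c * l i) = supp l.
Proof. by move=> c_neq0; apply/setP => i; rewrite !inE mulf_eq0 negb_or c_neq0. Qed.

Lemma conformal_partZ l nu c :
  0 < c -> conformal_part l nu -> conformal_part l (fun i => c * nu i).
Proof.
move=> cpos [knu cnu snu]; split; [exact: lkernelZ | | by rewrite suppZ ?gt_eqF].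
move=> i; have [lnu0 lnu] := cnu i; split; first by rewrite mulrCA mulr_ge0 // ltW.
by move/lnu ->; rewrite mulr0.
Qed.

(* Move from [l] along [-mu] until the first coordinate of [l] vanishes. *)
Lemma conformal_cut l mu : lkernel l -> lkernel mu -> (forall i, l i = 0 -> mu i = 0) ->
  (exists i, 0 < l i * mu i) -> exists t, 0 < t /\ conformal_part l (fun i => l i - t * mu i).
Proof.
move=> kl kmu zl [i1 pos1].
case: (@arg_minP _ _ _ i1 (fun i => 0 < l i * mu i) (fun i => l i / mu i) pos1)
  => i0 pos0 minr.
have nz i : 0 < l i * mu i -> l i != 0 /\ mu i != 0.
  by move=> p; split; apply: contraTneq p => ->; rewrite ?mul0r ?mulr0 ltxx.
have ratio_gt0 i : 0 < l i * mu i -> 0 < l i / mu i.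
  move=> p; have [_ mui] := nz i p.
  have -> : l i / mu i = (l i * mu i) / (mu i ^+ 2) by field.
  by rewrite divr_gt0 // exprn_even_gt0.
have [li0 mui0] := nz i0 pos0; set t := l i0 / mu i0.
have t0 : 0 < t := ratio_gt0 i0 pos0.
exists t; split => //; split.
- by apply: eq_lkernel (lkernel_comb 1 (- t) kl kmu) => i; ring.
- move=> i; split; last by move=> li; rewrite li (zl i li) mulr0 subrr.
  case: (ltP 0 (l i * mu i)) => p.
    have [_ mui] := nz i p.
    have -> : l i * (l i - t * mu i) = (l i * mu i) * (l i / mu i - t) by field.
    by apply: mulr_ge0; [exact: ltW | rewrite subr_ge0 minr].
  have : 0 <= t * - (l i * mu i) by apply: mulr_ge0; [exact: ltW | rewrite oppr_ge0].
  have := sqr_ge0 (l i); rewrite expr2; lra.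
- apply: proper_card; apply/properP; split.
    apply/subsetP => i; rewrite !inE; apply: contra => /eqP li.
    by rewrite li zl // mulr0 subrr.
  by exists i0; rewrite !inE ?li0 // /t divfK // subrr eqxx.
Qed.

Lemma nonelementary_split l : lkernel l -> ~ elementary l ->
  exists nu1 nu2,
    [/\ conformal_part l nu1, conformal_part l nu2 & forall i, l i = nu1 i + nu2 i].
Proof.
move=> kl nel.
have [mu [kmu smu [i0 mui0]]] :
    exists mu, [/\ lkernel mu, supp mu \proper supp l & exists i, mu i != 0].
  apply: contrapT => nex; apply: nel => mu kmu smu i; apply/eqP; apply: contrapT => mui.
  by apply: nex; exists mu; split => //; exists i; apply/negP.
have li0 : l i0 != 0 by move/proper_sub/subsetP: smu => /(_ i0); rewrite !inE; apply.
have zl i : l i = 0 -> mu i = 0.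
  move=> li; apply/eqP; apply: contraLR (proper_sub smu) => mui; apply/subsetPn.
  by exists i; rewrite !inE ?li ?eqxx.
wlog pos : mu kmu smu mui0 zl / exists i, 0 < l i * mu i.
  move=> gen; case: (ltP 0 (l i0 * mu i0)) => p; first by apply: (gen mu) => //; exists i0.
  apply: (gen (fun i => -1 * mu i)).
  - exact: lkernelZ.
  - by rewrite suppZ // oppr_eq0 oner_neq0.
  - by rewrite mulN1r oppr_eq0.
  - by move=> i /zl ->; rewrite mulr0.
  - by exists i0; rewrite mulN1r mulrN oppr_gt0 lt_neqAle p mulf_neq0.
have [t [t0 part1]] := conformal_cut kl kmu zl pos.
case: (EM (exists j, 0 < l j * (-1 * mu j))) => [neg|noneg].
  have zl' i : l i = 0 -> -1 * mu i = 0 by move/zl ->; rewrite mulr0.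
  have [s [s0 part2]] := conformal_cut kl (lkernelZ (-1) kmu) zl' neg.
  have st : 0 < s + t by rewrite addr_gt0.
  exists (fun i => s / (s + t) * (l i - t * mu i)),
         (fun i => t / (s + t) * (l i - s * (-1 * mu i))).
  split; [exact: conformal_partZ (divr_gt0 _ _) part1 | | ].
    exact: conformal_partZ (divr_gt0 _ _) part2.
  by move=> i; field; rewrite gt_eqF.
exists (fun i => l i - t * mu i), (fun i => t * mu i); split => // [|i]; last by rewrite subrK.
split; [exact: lkernelZ | | by rewrite suppZ ?gt_eqF ?proper_card].
move=> i; split; last by move/zl ->; rewrite mulr0.
rewrite mulrCA; apply: mulr_ge0; first exact: ltW.
rewrite leNgt; apply/negP => neg; apply: noneg.
by exists i; rewrite mulN1r mulrN oppr_gt0.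
Qed.

Lemma conformal_sum_obstruction a s l nu1 nu2 :
  obstruction a s l -> conformal l nu1 -> conformal l nu2 ->
  (forall i, l i = nu1 i + nu2 i) -> obstruction a s nu1 \/ obstruction a s nu2.
Proof.
move=> [sl0 la0 strict] c1 c2 e.
have sgn nu i : conformal l nu -> 0 <= s i * nu i.
  move=> cnu; have [lnu0 lnu] := cnu i; case: (eqVneq (l i) 0) => [/lnu ->|li].
    by rewrite mulr0.
  have ll : 0 < l i * l i by rewrite -expr2 exprn_even_gt0.
  have : 0 <= (s i * l i) * (l i * nu i) by rewrite mulr_ge0.
  have -> : s i * l i * (l i * nu i) = (s i * nu i) * (l i * l i) by ring.
  by rewrite pmulr_lge0.
have s1 i : 0 <= s i * nu1 i by apply: sgn.
have s2 i : 0 <= s i * nu2 i by apply: sgn.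
have ed : dotl l a = dotl nu1 a + dotl nu2 a.
  by rewrite /dotl -big_split; apply: eq_bigr => i _; rewrite e mulrDl.
case: (ltP 0 (dotl nu1 a)) => d1; first by left; split; rewrite ?ltW //; right.
case: (ltP 0 (dotl nu2 a)) => d2; first by right; split; rewrite ?ltW //; right.
have [d1' d2'] : dotl nu1 a = 0 /\ dotl nu2 a = 0 by move: la0; rewrite ed; lra.
case: strict => [[i si]|]; last by rewrite ed d1' d2' addr0 ltxx.
move: si; rewrite e mulrDr => si.
case: (ltP 0 (s i * nu1 i)) => p1; first by left; split; rewrite ?d1' //; left; exists i.
by right; split; rewrite ?d2' //; left; exists i; have := s1 i; lra.
Qed.

Lemma elementary_obstruction a s l : lkernel l -> obstruction a s l ->
  exists c, [/\ lkernel c, obstruction a s c & elementary c].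
Proof.
move: {2}#|supp l| (leqnn #|supp l|) => k; elim: k l => [|k IH] l lk kl ob.
  by exists l; split => // mu _ /proper_card; rewrite ltnNge (leq_trans lk).
case: (EM (elementary l)) => [el|nel]; first by exists l.
have [nu1 [nu2 [[k1 c1 s1] [k2 c2 s2] e]]] := nonelementary_split kl nel.
by case: (conformal_sum_obstruction ob c1 c2 e) => ob'; apply: IH ob' => //;
  rewrite -ltnS (leq_trans _ lk).
Qed.

End ElementaryVectors.

Section CircuitSigns.
Variables (R : realType) (m n : nat) (U : 'M[R]_(m, n)).

Local Notation lkernel := (lkernel U).

Lemma lkernel_rows (c : 'I_m -> R) : lkernel c <-> \sum_(i < m) c i *: row i U = 0.
Proof.
split=> [kc|sum0 k].
  apply/matrixP => i' k; rewrite summxE mxE -[RHS](kc k).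
  by apply: eq_bigr => i _; rewrite !mxE.
move: (congr1 (fun M : 'rV_n => M 0 k) sum0); rewrite summxE mxE => e.
by rewrite -[RHS]e; apply: eq_bigr => i _; rewrite !mxE.
Qed.

Lemma elementary_circuit c : lkernel c -> elementary U c -> (exists i, c i != 0) ->
  circuit U (supp c).
Proof.
move=> kc ec nzc; split.
  by exists c; split; [move=> i; rewrite inE negbK => /eqP | split => //; exact/lkernel_rows].
move=> C' ltC' [mu [mu0 [[i mui] /lkernel_rows kmu]]].
have smu : supp mu \subset C'.
  by apply/subsetP => j; rewrite inE; apply: contraR => /mu0 ->; rewrite eqxx.
by move/eqP: mui; apply; apply: ec kmu (sub_proper_trans smu ltC') i.
Qed.

Lemma elementary_circuit_vec C (v : 'cV[R]_m) c : circuit_vec U C v -> lkernel c ->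
  elementary U c -> supp c = C -> (exists i, c i != 0) -> exists t, forall i, c i = t * v i 0.
Proof.
move=> [/lkernel_rows kv suppv] kc ec sc [e ce].
have ve : v e 0 != 0 by apply/suppv; rewrite -sc inE.
exists (c e / v e 0) => i; apply/eqP; rewrite -subr_eq0; apply/eqP.
pose mu j := c j - c e / v e 0 * v j 0.
have kmu : lkernel mu.
  by apply: eq_lkernel (lkernel_comb 1 (- (c e / v e 0)) kc kv) => j; rewrite /mu; ring.
apply: (ec mu kmu); apply/properP; split.
  apply/subsetP => j; rewrite !inE; apply: contraR; rewrite negbK => /eqP cj.
  have /negP vj : j \notin C by rewrite -sc inE cj eqxx.
  by rewrite /mu cj; case: (eqVneq (v j 0) 0) => [->|/suppv //]; rewrite mulr0 subr0.
by exists e; rewrite !inE // /mu divfK // subrr eqxx.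
Qed.

(* An elementary obstruction at [b] is a multiple of a circuit vector, hence an
   obstruction at [a] as well. *)
Lemma sign_realizable_transfer (cC : {set 'I_m} -> 'cV[R]_m) a b s : sign_vector s ->
  (forall C, circuit U C -> circuit_vec U C (cC C)) ->
  (forall C, circuit U C -> Num.sg (dotv (cC C) a) = Num.sg (dotv (cC C) b)) ->
  sign_realizable U a s -> sign_realizable U b s.
Proof.
move=> sign_s cvec sgab ra; apply: contrapT => nrb.
have [l [kl ol]] := not_realizable_obstruction sign_s nrb.
have [c [kc oc ec]] := elementary_obstruction kl ol.
have nzc := obstruction_neq0 oc.
have circ := elementary_circuit kc ec nzc.
have [t ct] := elementary_circuit_vec (cvec _ circ) kc ec erefl nzc.
have dotc w : dotl c w = t * dotv (cC (supp c)) w.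
  by rewrite /dotl /dotv mulr_sumr; apply: eq_bigr => i _; rewrite ct mulrA.
apply: (obstruction_not_realizable kc _ ra); apply: obstruction_sgr oc.
by rewrite !dotc !sgrM sgab.
Qed.

End CircuitSigns.

Section DerivedArrangement.
Variables (R : realType) (m n : nat) (U : 'M[R]_(m, n)) (cC : {set 'I_m} -> 'cV[R]_m).

Lemma dotv_near (c y z : 'cV[R]_m) e : near_inf z y e ->
  `|dotv c z - dotv c y| <= (\sum_i `|c i 0|) * e.
Proof.
move=> zy; rewrite /dotv -sumrB mulr_suml; apply: le_trans (ler_norm_sum _ _ _) _.
by apply: ler_sum => i _; rewrite -mulrBr normrM ler_wpM2l // ltW.
Qed.

Lemma closure_sgr_dotv (S : pset R m) (c y : 'cV[R]_m) eps : Defs.closure S y ->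
  Num.sg (dotv c y) != 0 -> (forall z, S z -> Num.sg (dotv c z) = eps) ->
  eps = Num.sg (dotv c y).
Proof.
move=> cly cy0 Ssg; have cy : 0 < `|dotv c y| by rewrite normr_gt0 -sgr_eq0.
pose M := \sum_i `|c i 0| + 1.
have M0 : 0 < M by rewrite ltr_wpDl ?sumr_ge0.
have [z [Sz zy]] := cly (`|dotv c y| / M) (divr_gt0 cy M0).
rewrite -(Ssg z Sz); apply: sgr_near; apply: le_lt_trans (dotv_near c zy) _.
rewrite mulrCA gtr_pMr // ltr_pdivrMr // mul1r /M; lra.
Qed.

Lemma drelint_sgr_dotv F a b : drelint U cC F a -> drelint U cC F b ->
  forall C, circuit U C -> Num.sg (dotv (cC C) a) = Num.sg (dotv (cC C) b).
Proof.
move=> [e1 [_ [cl1 ae1]]] [e2 [_ [cl2 be2]]] C circ.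
have self (S : pset R m) y : S y -> Defs.closure S y.
  by move=> Sy e e0; exists y; split => // i; rewrite subrr normr0.
have acl : Defs.closure (dopen_set U cC e2) a by rewrite cl2 -cl1; apply: self.
have bcl : Defs.closure (dopen_set U cC e1) b by rewrite cl1 -cl2; apply: self.
case: (eqVneq (Num.sg (dotv (cC C) a)) 0) => [a0|a0].
  case: (eqVneq (Num.sg (dotv (cC C) b)) 0) => [b0|b0]; first by rewrite a0 b0.
  by rewrite -(closure_sgr_dotv bcl b0 (fun z ez => ez C circ)) -(ae1 C circ).
by rewrite -(closure_sgr_dotv acl a0 (fun z ez => ez C circ)) (be2 C circ).
Qed.

End DerivedArrangement.

Section Polyhedra.
Variables (R : realType) (m n : nat) (U : 'M[R]_(m, n)) (I J K : {set 'I_m}).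
Hypotheses (dJK : [disjoint J & K]) (cov : I :|: J :|: K = setT).

Local Notation Ux x i := ((U *m x) i 0).
Local Notation Pa a := (Ppoly U a I J K).
Local Notation Ptight a T := (Ppoly U a T (J :\: T) (K :\: T)).

Lemma IJK_cases i : [\/ i \in I, i \in J | i \in K].
Proof.
have := in_setT i; rewrite -cov !inE => /orP[/orP[]|] iX;
  [constructor 1 | constructor 2 | constructor 3]; exact: iX.
Qed.

Lemma PtightP (a : 'cV[R]_m) (T : {set 'I_m}) (x : 'cV[R]_n) : I \subset T ->
  Ptight a T x <-> Pa a x /\ {in T, forall i, Ux x i = a i 0}.
Proof.
move=> IT; split=> [PTx|[Px xT] i].
  split=> [i|i /(PTx i).1 //]; have [eT [leJ geK]] := PTx i.
  split; first by move=> /(subsetP IT); apply: eT.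
  split=> iX; case: (boolP (i \in T)) => iT; rewrite ?(eT iT) //;
    [apply: leJ | apply: geK]; by rewrite inE iT iX.
have [_ [leJ geK]] := Px i; split; first exact: xT.
by split; rewrite inE => /andP[_ iX]; [apply: leJ | apply: geK].
Qed.

(* The paper's [I_P(G)], which is the tight set of any relative-interior point of [G]
   by [tight_relint]. *)
Definition tight_on (a : 'cV[R]_m) (G : pset R n) : {set 'I_m} :=
  [set i | `[< forall y, G y -> Ux y i = a i 0 >]].

Lemma tight_onP (a : 'cV[R]_m) (G : pset R n) i :
  reflect (forall y, G y -> Ux y i = a i 0) (i \in tight_on a G).
Proof. by rewrite inE; apply: asboolP. Qed.

Lemma face_sub (a : 'cV[R]_m) (G : pset R n) : isFace (Pa a) G -> forall y, G y -> Pa a y.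
Proof. by case=> c [d [_ ->]] y []. Qed.

Lemma sub_tight_on (a : 'cV[R]_m) (G : pset R n) :
  (forall y, G y -> Pa a y) -> I \subset tight_on a G.
Proof. by move=> GP; apply/subsetP => i Ii; apply/tight_onP => y /GP /(_ i) [/(_ Ii)]. Qed.

Lemma Ux_comb (p q : R) (x y : 'cV[R]_n) i : Ux (p *: x - q *: y) i = p * Ux x i - q * Ux y i.
Proof. by rewrite mulmxBr -!scalemxAr !mxE. Qed.

Lemma dotv_comb (c : 'cV[R]_n) (p q : R) (x y : 'cV[R]_n) :
  dotv c (p *: x - q *: y) = p * dotv c x - q * dotv c y.
Proof. by rewrite /dotv !mulr_sumr -sumrB; apply: eq_bigr => i _; rewrite !mxE; ring. Qed.

(* If some [y] in [G] were not tight at [i], stepping from [x] slightly away from [y]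
   would stay in [G] yet violate inequality [i]. *)
Lemma tight_relint (a : 'cV[R]_m) (G : pset R n) x : (forall y, G y -> Pa a y) ->
  relint G x -> tight U a x = tight_on a G.
Proof.
move=> GP [Gx [e [e0 relG]]]; apply/setP => i; rewrite /tight !inE.
apply/eqP/asboolP => [xi y Gy|]; last by apply.
apply: contrapT => yi.
have [t [t0 small]] := exists_small_scale (fun k => x k 0 - y k 0) e0.
pose z := (1 + t) *: x - t *: y.
have Gz : G z.
  apply: relG => [|k]; last first.
    rewrite /z !mxE; have -> : x k 0 - ((1 + t) * x k 0 - t * y k 0) =
      - (t * (x k 0 - y k 0)) by ring.
    by rewrite normrN normrM gtr0_norm.
  exists 2, (fun j : 'I_2 => if j == ord0 then x else y),
    (fun j : 'I_2 => if j == ord0 then 1 + t else - t).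
  split; first by move=> j; case: eqP.
  by rewrite !big_ord_recl !big_ord0 /= !addr0 scaleNr; split; first ring.
have Py := GP y Gy; have Pz := GP z Gz.
have ez : Ux z i = (1 + t) * a i 0 - t * Ux y i by rewrite Ux_comb xi.
case: (IJK_cases i) => iX; first by apply: yi; apply: (Py i).1.
- have : Ux y i < a i 0 by rewrite lt_neqAle (Py i).2.1 // andbT; apply/eqP.
  rewrite -subr_gt0 => /(mulr_gt0 t0); have := (Pz i).2.1 iX; rewrite ez; lra.
- have : a i 0 < Ux y i by rewrite lt_neqAle (Py i).2.2 // andbT eq_sym; apply/eqP.
  rewrite -subr_gt0 => /(mulr_gt0 t0); have := (Pz i).2.2 iX; rewrite ez; lra.
Qed.

Lemma isFace_empty (a : 'cV[R]_m) : isFace (Pa a) (fun _ => False).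
Proof.
have d0 x : dotv (0 : 'cV[R]_n) x = 0 by rewrite /dotv big1 // => k _; rewrite mxE mul0r.
exists 0, 1; split=> [x _|]; first by rewrite d0 ler01.
by apply: funext => x; apply: propext; split=> // -[_]; rewrite d0 => /eqP; rewrite eq_sym oner_eq0.
Qed.

(* The face cut out by the functional that adds the rows of [J] and subtracts those
   of [K], over [T]. *)
Lemma isFace_Ptight (a : 'cV[R]_m) (T : {set 'I_m}) : I \subset T -> isFace (Pa a) (Ptight a T).
Proof.
move=> IT; pose wt i : R := if i \in J then 1 else if i \in K then -1 else 0.
exists (\col_k (\sum_(i in T) wt i * U i k)), (\sum_(i in T) wt i * a i 0).
have cx x : dotv (\col_k (\sum_(i in T) wt i * U i k)) x = \sum_(i in T) wt i * Ux x i.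
  rewrite /dotv; under eq_bigr do rewrite mxE mulr_suml.
  rewrite exchange_big; apply: eq_bigr => i _; rewrite mxE mulr_sumr.
  by apply: eq_bigr => k _; ring.
have wt_le x i : Pa a x -> wt i * Ux x i <= wt i * a i 0.
  move=> Px; rewrite /wt; case: ifP => iJ; first by rewrite !mul1r (Px i).2.1.
  by case: ifP => iK; rewrite ?mul0r // !mulN1r lerN2 (Px i).2.2.
split=> [x Px|]; first by rewrite cx; apply: ler_sum => i _; apply: wt_le.
apply: funext => x; apply: propext; split.
  by move/(PtightP a x IT) => [Px xT]; split; rewrite // cx; apply: eq_bigr => i /xT ->.
move=> [Px cxd]; apply/(PtightP a x IT); split => // i iT.
have wt_ge0 j : j \in T -> 0 <= wt j * a j 0 - wt j * Ux x j by rewrite subr_ge0 wt_le.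
have := psumr_eq0P wt_ge0 _ iT; rewrite sumrB -cx cxd subrr => /(_ erefl) /eqP.
rewrite subr_eq0 /wt; case: ifP => iJ; first by rewrite !mul1r => /eqP.
case: ifP => iK; first by rewrite !mulN1r eqr_opp => /eqP.
by case: (IJK_cases i) => iX _; [apply: (Px i).1 | rewrite iX in iJ | rewrite iX in iK].
Qed.

Definition barycenter (x0 : 'cV[R]_n) (w : 'I_m -> 'cV[R]_n) : 'cV[R]_n :=
  (m%:R + 1)^-1 *: (x0 + \sum_j w j).

Lemma barycenter_weight : 0 < (m%:R + 1 : R)^-1 /\ (m%:R + 1 : R)^-1 * (m%:R + 1) = 1.
Proof.
have m1 : 0 < m%:R + 1 :> R by rewrite ltr_wpDl.
by split; rewrite ?invr_gt0 ?mulVf ?gt_eqF.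
Qed.

Lemma Ux_barycenter (a : 'cV[R]_m) x0 w i :
  Ux (barycenter x0 w) i - a i 0 =
  (m%:R + 1)^-1 * ((Ux x0 i - a i 0) + \sum_j (Ux (w j) i - a i 0)).
Proof.
have [_ al1] := barycenter_weight.
rewrite /barycenter -scalemxAr mxE mulmxDr mxE mulmx_sumr summxE sumrB sumr_const card_ord.
rewrite -[a i 0 *+ m]mulr_natr; set al := (m%:R + 1)^-1 in al1 *.
by transitivity (al * (Ux x0 i + \sum_j Ux (w j) i) - al * (m%:R + 1) * a i 0);
  [rewrite al1 mul1r | ring].
Qed.

Lemma dotv_barycenter (c : 'cV[R]_n) d x0 w : dotv c x0 = d ->
  (forall j, dotv c (w j) = d) -> dotv c (barycenter x0 w) = d.
Proof.
move=> cx0 cw; have [_ al1] := barycenter_weight.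
rewrite /dotv /barycenter; set al := (m%:R + 1)^-1 in al1 *.
transitivity (al * \sum_k (c k 0 * x0 k 0 + \sum_j c k 0 * w j k 0)).
  rewrite mulr_sumr; apply: eq_bigr => k _; rewrite !mxE summxE !mulrDr mulrCA.
  by congr (_ + _); rewrite !mulr_sumr; apply: eq_bigr => j _; ring.
rewrite big_split /= exchange_big -[\sum_k _ * x0 k 0]/(dotv c x0) cx0.
rewrite (eq_bigr (fun _ => d)) => [|j _]; last exact: cw.
rewrite sumr_const card_ord -[d *+ m]mulr_natr.
by transitivity (al * (m%:R + 1) * d); [ring | rewrite al1 mul1r].
Qed.

Lemma Ppoly_barycenter (a : 'cV[R]_m) x0 w : Pa a x0 -> (forall j, Pa a (w j)) ->
  Pa a (barycenter x0 w).
Proof.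
move=> Px0 Pw i; have [al0 _] := barycenter_weight; split; [|split] => iX.
- apply/eqP; rewrite -subr_eq0 Ux_barycenter (Px0 i).1 // subrr add0r big1 ?mulr0 //.
  by move=> j _; rewrite (Pw j i).1 // subrr.
- rewrite -subr_le0 Ux_barycenter pmulr_rle0 //.
  have : \sum_j (Ux (w j) i - a i 0) <= 0.
    by apply: sumr_le0 => j _; rewrite subr_le0 (Pw j i).2.1.
  by have := (Px0 i).2.1 iX; lra.
- rewrite -subr_ge0 Ux_barycenter pmulr_rge0 //.
  have : 0 <= \sum_j (Ux (w j) i - a i 0).
    by apply: sumr_ge0 => j _; rewrite subr_ge0 (Pw j i).2.2.
  by have := (Px0 i).2.2 iX; lra.
Qed.

Lemma barycenter_not_tight (a : 'cV[R]_m) x0 w i : Pa a x0 -> (forall j, Pa a (w j)) ->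
  i \notin I -> Ux (w i) i != a i 0 -> Ux (barycenter x0 w) i != a i 0.
Proof.
move=> Px0 Pw iI wi; have [al0 _] := barycenter_weight.
rewrite -subr_eq0 Ux_barycenter mulf_eq0 negb_or gt_eqF //=.
case: (IJK_cases i) => iX; first by rewrite iX in iI.
- apply: ltr0_neq0; have : \sum_j (Ux (w j) i - a i 0) < 0.
    apply: (sumr_lt0_term (j := i)) => [j|]; first by rewrite subr_le0 (Pw j i).2.1.
    by rewrite subr_lt0 lt_neqAle wi (Pw i i).2.1.
  by have := (Px0 i).2.1 iX; lra.
- apply: lt0r_neq0; have : 0 < \sum_j (Ux (w j) i - a i 0).
    apply: (sumr_gt0_term (j := i)) => [j|]; first by rewrite subr_ge0 (Pw j i).2.2.
    by rewrite subr_gt0 lt_neqAle eq_sym wi (Pw i i).2.2.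
  by have := (Px0 i).2.2 iX; lra.
Qed.

(* Average a point of [G] with, for every index not tight on [G], a point of [G]
   on which that index is not tight. *)
Lemma face_tight_point (a : 'cV[R]_m) (G : pset R n) x0 : isFace (Pa a) G -> G x0 ->
  exists2 x, G x & tight U a x = tight_on a G.
Proof.
move=> fG Gx0; have IT := sub_tight_on (face_sub fG).
case: fG IT => c [d [_ eG]]; rewrite {}eG in Gx0 * => IT.
set T := tight_on a _ in IT *; case: Gx0 => Px0 cx0.
have /choice[w wP] : forall i, exists y : 'cV[R]_n,
    [/\ Pa a y, dotv c y = d & i \notin T -> Ux y i != a i 0].
  move=> i; case: (boolP (i \in T)) => iT; first by exists x0.
  apply: contrapT => nw; move/negP: iT; apply; apply/tight_onP => y [Py cy].
  by apply: contrapT => yi; apply: nw; exists y; split => // _; apply/eqP.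
have Pw j : Pa a (w j) by case: (wP j).
have Gx : Pa a (barycenter x0 w) /\ dotv c (barycenter x0 w) = d.
  by split; [apply: Ppoly_barycenter | apply: dotv_barycenter => // j; case: (wP j)].
exists (barycenter x0 w) => //; apply/setP => i; rewrite /tight inE.
case: (boolP (i \in T)) => iT; first by apply/eqP; move/tight_onP: iT; apply.
case: (wP i) => _ _ /(_ iT) wi; apply/negbTE/barycenter_not_tight => //.
by apply: contra iT; apply/subsetP.
Qed.

Lemma face_Ptight (a : 'cV[R]_m) (G : pset R n) x0 : isFace (Pa a) G -> G x0 ->
  forall y, G y <-> Ptight a (tight_on a G) y.
Proof.
move=> fG Gx0; have [x Gx tx] := face_tight_point fG Gx0.
have IT := sub_tight_on (face_sub fG).
case: fG IT tx Gx => c [d [Pcd eG]]; rewrite {}eG => IT tx [Px cx] y.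
set T := tight_on a _ in IT tx *.
split=> [[Py cy]|/(PtightP a y IT) [Py yT]].
  by apply/(PtightP a y IT); split => // i /tight_onP; apply.
split => //; apply/eqP; rewrite eq_le Pcd //=.
have xT i : i \in T -> Ux x i = a i 0 by rewrite -tx inE => /eqP.
have gap i : i \notin T -> 0 < `|Ux x i - a i 0|.
  by move=> iT; rewrite normr_gt0 subr_eq0; apply: contra iT; rewrite -tx inE.
have [g [g0 leg]] := exists_pos_lower_bound gap.
have [t [t0 small]] := exists_small_scale (fun i => Ux x i - Ux y i) g0.
pose z := (1 + t) *: x - t *: y.
have ez i : Ux z i - a i 0 = (Ux x i - a i 0) + t * (Ux x i - Ux y i).
  by rewrite Ux_comb; ring.
(* Off [T], [z] is so close to [x] that it lies strictly on the same sides. *)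
have sz i : i \notin T -> Num.sg (Ux z i - a i 0) = Num.sg (Ux x i - a i 0).
  move=> iT; apply: sgr_near; rewrite ez addrAC subrr add0r normrM gtr0_norm //.
  exact: lt_le_trans (small i) (leg i iT).
have Pz : Pa a z.
  move=> i; case: (boolP (i \in T)) => iT.
    have -> : Ux z i = a i 0 by apply/eqP; rewrite -subr_eq0 ez xT // yT // !subrr mulr0 addr0.
    by split => // _; split => _.
  have [_ [xJ xK]] := Px i; split; [|split] => iX.
  - by move: iT; rewrite (subsetP IT i iX).
  - by rewrite -subr_le0 -sgr_le0 sz // sgr_le0 subr_le0 xJ.
  - by rewrite -subr_ge0 -sgr_ge0 sz // sgr_ge0 subr_ge0 xK.
have := Pcd z Pz; rewrite dotv_comb cx => zd.
have : t * d <= t * dotv c y by lra.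
by rewrite ler_pM2l.
Qed.

Lemma tight_Ptight (a : 'cV[R]_m) (T : {set 'I_m}) x : I \subset T -> Pa a x ->
  tight U a x = T -> Ptight a T x.
Proof. by move=> IT Px tx; apply/(PtightP a x IT); split => // i; rewrite -tx inE => /eqP. Qed.

Lemma tight_on_Ptight (a : 'cV[R]_m) (T : {set 'I_m}) x : I \subset T -> Pa a x ->
  tight U a x = T -> tight_on a (Ptight a T) = T.
Proof.
move=> IT Px tx; apply/setP => i; apply/tight_onP/idP => [xi|iT y].
  by rewrite -tx inE (xi x (tight_Ptight IT Px tx)).
by move/(PtightP a y IT) => [_ /(_ i iT)].
Qed.

Definition tight_sign (T : {set 'I_m}) i : R :=
  if i \in T then 0 else if i \in J then -1 else 1.

Lemma tight_sign_vector T : sign_vector (tight_sign T).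
Proof.
by move=> i; rewrite /tight_sign; case: ifP => _; [left | case: ifP; right; [right | left]].
Qed.

Lemma tight_signP (a : 'cV[R]_m) (T : {set 'I_m}) x : I \subset T ->
  Pa a x /\ tight U a x = T <-> forall i, Num.sg (Ux x i - a i 0) = tight_sign T i.
Proof.
move=> IT; rewrite /tight_sign; split=> [[Px tx] i|xs].
  case: (boolP (i \in T)) => iT; first by move: iT; rewrite -tx inE => /eqP ->; rewrite subrr sgr0.
  have xi : Ux x i != a i 0 by move: iT; rewrite -tx inE.
  have [_ [xJ xK]] := Px i; case: ifP => iJ.
    by apply: ltr0_sg; rewrite subr_lt0 lt_neqAle xi xJ.
  case: (IJK_cases i) => iX; [by move: iT; rewrite (subsetP IT i iX) | by rewrite iX in iJ |].
  by apply: gtr0_sg; rewrite subr_gt0 lt_neqAle eq_sym xi xK.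
have xT i : i \in T -> Ux x i = a i 0.
  by move=> iT; move: (xs i); rewrite iT => /eqP; rewrite sgr_eq0 subr_eq0 => /eqP.
have xJ i : i \notin T -> i \in J -> Ux x i < a i 0.
  by move=> iT iJ; move: (xs i); rewrite (negbTE iT) iJ => /eqP; rewrite sgr_cp0 subr_lt0.
have xK i : i \notin T -> i \in K -> a i 0 < Ux x i.
  move=> iT iK; move: (xs i); rewrite (negbTE iT) (disjointFl dJK iK) => /eqP.
  by rewrite sgr_cp0 subr_gt0.
split.
  move=> i; split; first by move=> /(subsetP IT); apply: xT.
  split=> iX; case: (boolP (i \in T)) => iT; rewrite ?(xT i iT) //; apply: ltW;
    [exact: xJ | exact: xK].
apply/setP => i; rewrite /tight inE; case: (boolP (i \in T)) => iT; first by rewrite xT ?eqxx.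
case: (IJK_cases i) => iX; first by move: iT; rewrite (subsetP IT i iX).
- by rewrite lt_eqF // xJ.
- by rewrite gt_eqF // xK.
Qed.

Lemma tight_transfer (cC : {set 'I_m} -> 'cV[R]_m) (a b : 'cV[R]_m) (T : {set 'I_m}) :
  (forall C, circuit U C -> circuit_vec U C (cC C)) ->
  (forall C, circuit U C -> Num.sg (dotv (cC C) a) = Num.sg (dotv (cC C) b)) ->
  I \subset T -> (exists x, Pa a x /\ tight U a x = T) -> exists y, Pa b y /\ tight U b y = T.
Proof.
move=> cvec sgab IT [x /(tight_signP a x IT) xs].
have [y ys] := sign_realizable_transfer (tight_sign_vector T) cvec sgab (ex_intro _ x xs).
by exists y; apply/(tight_signP b y IT).
Qed.

End Polyhedra.

Section FaceMap.
Variables (R : realType) (m n : nat) (U : 'M[R]_(m, n)) (I J K : {set 'I_m}).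
Hypotheses (dJK : [disjoint J & K]) (cov : I :|: J :|: K = setT).

Local Notation Pa a := (Ppoly U a I J K).
Local Notation Ptight a T := (Ppoly U a T (J :\: T) (K :\: T)).
Local Notation tight_on := (tight_on U).

(* The map [Phi] of the theorem; anything but a nonempty face of [P_a] goes to the
   empty set. *)
Definition face_map (a b : 'cV[R]_m) (G : pset R n) : pset R n :=
  if pselect (isFace (Pa a) G /\ exists x, G x) then Ptight b (tight_on a G)
  else (fun _ => False).

Lemma face_map_empty a b G : ~ (exists x, G x) -> face_map a b G = (fun _ => False).
Proof. by move=> G0; rewrite /face_map; case: pselect => // -[]. Qed.

Lemma face_mapE a b G : isFace (Pa a) G -> (exists x, G x) ->
  face_map a b G = Ptight b (tight_on a G).
Proof. by move=> fG nG; rewrite /face_map; case: pselect => // -[]. Qed.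

Variables (cC : {set 'I_m} -> 'cV[R]_m) (a b : 'cV[R]_m).
Hypothesis cvec : forall C, circuit U C -> circuit_vec U C (cC C).
Hypothesis sgab : forall C, circuit U C -> Num.sg (dotv (cC C) a) = Num.sg (dotv (cC C) b).

Lemma face_map_tight_point G : isFace (Pa a) G -> (exists x, G x) ->
  exists y, Pa b y /\ tight U b y = tight_on a G.
Proof.
move=> fG [x0 Gx0]; have [x Gx tx] := face_tight_point cov fG Gx0.
apply: (tight_transfer dJK cov cvec sgab (sub_tight_on (face_sub fG))).
by exists x; split => //; exact (face_sub fG Gx).
Qed.

Lemma face_map_nonempty G : isFace (Pa a) G -> (exists x, G x) -> exists y, face_map a b G y.
Proof.
move=> fG nG; have [y [Py ty]] := face_map_tight_point fG nG.
by exists y; rewrite face_mapE //; apply: tight_Ptight (sub_tight_on (face_sub fG)) Py ty.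
Qed.

Lemma tight_on_face_map G : isFace (Pa a) G -> (exists x, G x) ->
  tight_on b (face_map a b G) = tight_on a G.
Proof.
move=> fG nG; have [y [Py ty]] := face_map_tight_point fG nG.
by rewrite face_mapE //; apply: tight_on_Ptight (sub_tight_on (face_sub fG)) Py ty.
Qed.

Lemma face_map_relint G x : isFace (Pa a) G -> (exists x, G x) -> relint G x ->
  [/\ face_map a b G = Ptight b (tight U a x), exists y, face_map a b G y &
      forall y, relint (face_map a b G) y -> tight U b y = tight U a x].
Proof.
move=> fG nG rx; have tx := tight_relint cov (face_sub fG) rx.
split; [by rewrite tx face_mapE | exact: face_map_nonempty |].
move=> y ry; rewrite tx -(tight_on_face_map fG nG).
apply: (tight_relint (U := U) (a := b) cov _ ry).
by move=> z; rewrite face_mapE // => /(PtightP _ _ _ _ _ (sub_tight_on (face_sub fG))) [].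
Qed.

Lemma face_map_isFace G : isFace (Pa a) G -> isFace (Pa b) (face_map a b G).
Proof.
move=> fG; case: (EM (exists x, G x)) => nG.
  by rewrite face_mapE //; apply: (isFace_Ptight U cov b (sub_tight_on (face_sub fG))).
by rewrite face_map_empty //; apply: isFace_empty.
Qed.

Lemma face_map_inj G1 G2 : isFace (Pa a) G1 -> isFace (Pa a) G2 ->
  face_map a b G1 = face_map a b G2 -> G1 = G2.
Proof.
move=> fG1 fG2 e12.
have nonempty_iff G : isFace (Pa a) G -> (exists x, G x) <-> exists y, face_map a b G y.
  move=> fG; split; first exact: face_map_nonempty.
  by apply: contraPP => nG; rewrite face_map_empty // => -[].
case: (EM (exists x, G1 x)) => nG1.
  have nG2 : exists x, G2 x by apply/(nonempty_iff _ fG2); rewrite -e12; apply/(nonempty_iff _ fG1).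
  have [x1 G1x1] := nG1; have [x2 G2x2] := nG2.
  apply: funext => y; apply: propext.
  rewrite (face_Ptight cov fG1 G1x1) (face_Ptight cov fG2 G2x2).
  by rewrite -(tight_on_face_map fG1 nG1) -(tight_on_face_map fG2 nG2) e12.
have nG2 : ~ exists x, G2 x.
  by move=> /(nonempty_iff _ fG2); rewrite -e12 => /(nonempty_iff _ fG1).
by apply: funext => y; apply: propext; split => Gy; [case: nG1 | case: nG2]; exists y.
Qed.

Lemma face_map_surj H : isFace (Pa b) H -> exists G, isFace (Pa a) G /\ face_map a b G = H.
Proof.
move=> fH; case: (EM (exists y, H y)) => [[y0 Hy0]|nH]; last first.
  exists (fun _ => False); split; first exact: isFace_empty.
  rewrite face_map_empty; last by case.
  by apply: funext => y; apply: propext; split => // Hy; apply: nH; exists y.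
have [y Hy ty] := face_tight_point cov fH Hy0.
have IT := sub_tight_on (face_sub fH); set T := tight_on b H in IT ty.
have [x [Px tx]] : exists x, Pa a x /\ tight U a x = T.
  have sgba C : circuit U C -> Num.sg (dotv (cC C) b) = Num.sg (dotv (cC C) a).
    by move/sgab ->.
  apply: (tight_transfer dJK cov cvec sgba IT).
  by exists y; split => //; exact (face_sub fH Hy).
have fG := isFace_Ptight U cov a IT.
have nG : exists x, Ptight a T x by exists x; apply: tight_Ptight IT Px tx.
exists (Ptight a T); split => //; rewrite face_mapE // (tight_on_Ptight IT Px tx).
by apply: funext => z; apply: propext; rewrite (face_Ptight cov fH Hy0).
Qed.

End FaceMap.

Theorem mainTheorem10 (R : realType) (n m : nat) (U : 'M[R]_(m, n))
  (cC : {set 'I_m} -> 'cV[R]_m)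
  (F : pset R m) (a b : 'cV[R]_m) (I J K : {set 'I_m}) :
  (forall i : 'I_m, row i U != 0) ->
  (forall C, circuit U C -> circuit_vec U C (cC C)) ->
  dface U cC F -> drelint U cC F a -> drelint U cC F b ->
  [disjoint I & J] -> [disjoint I & K] -> [disjoint J & K] ->
  I :|: J :|: K = setT ->
  exists Phi : pset R n -> pset R n,
    (* Phi(empty) = empty *)
    Phi (fun _ => False) = (fun _ => False) /\
    (* definition of Phi on nonempty faces, nonemptiness, active triple index *)
    (forall G, isFace (Ppoly U a I J K) G -> (exists x, G x) ->
       forall x, relint G x ->
         Phi G = Ppoly U b (tight U a x) (J :\: tight U a x) (K :\: tight U a x) /\
         (exists y, Phi G y) /\
         (forall y, relint (Phi G) y ->
            (tight U b y, J :\: tight U b y, K :\: tight U b y) =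
            (tight U a x, J :\: tight U a x, K :\: tight U a x))) /\
    (* well-defined map of face posets *)
    (forall G, isFace (Ppoly U a I J K) G -> isFace (Ppoly U b I J K) (Phi G)) /\
    (* injective on faces *)
    (forall G1 G2, isFace (Ppoly U a I J K) G1 -> isFace (Ppoly U a I J K) G2 ->
       Phi G1 = Phi G2 -> G1 = G2) /\
    (* surjective onto faces *)
    (forall H, isFace (Ppoly U b I J K) H ->
       exists G, isFace (Ppoly U a I J K) G /\ Phi G = H).
Proof.
move=> _ cvec _ ra rb _ _ dJK cov.
have sgab := drelint_sgr_dotv ra rb.
exists (face_map U I J K a b); split; first by apply: face_map_empty => -[].
split.
  move=> G fG nG x rx; have [ePhi nPhi tPhi] := face_map_relint dJK cov cvec sgab fG nG rx.
  by do 2!split => //; move=> y /tPhi ->.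
split; first by move=> G /(face_map_isFace cov b).
split; first by move=> G1 G2 /(face_map_inj dJK cov cvec sgab); apply.
by move=> H /(face_map_surj dJK cov cvec sgab).
Qed.
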